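(* Let $T$ be a complete theory with monster model $\mathcal{U}$, $A\subseteq\mathcal{U}$ small, $\mu\in\mathfrak{M}_x(\mathcal{U})$, $\nu\in\mathfrak{M}_y(\mathcal{U})$. If $\mu$ is invariant over $A$ and $\mu\geq_{\mathbb{E},A}\nu$, then $\nu$ is invariant over $A$. Moreover, if $\mu$ is invariant and $\mu\geq_{\mathbb{E}}\nu$, then $\nu$ is invariant.
   Context: For $C\subseteq\mathcal{U}$, $\mathcal{L}_x(C)$ is the Boolean algebra of formulas in $x$ with parameters from $C$ modulo $T$, embedded in $\mathcal{L}_{xy}(C)$ via $\varphi(x)\mapsto\varphi(x)\wedge y=y$; $\mathfrak{M}_x(C)$ is the set of finitely additive probability measures on $\mathcal{L}_x(C)$. For $\omega\in\mathfrak{M}_{xy}(C)$, $\pi_x(\omega)(\varphi(x))=\omega(\varphi(x)\wedge y=y)$ (similarly $\pi_y$); $\omega|_D$ is restriction. $\mu\geq_{\mathbb{E},A}\nu$ means there is $\lambda\in\mathfrak{M}_{xy}(A)$ with $\pi_x(\lambda)=\mu|_A$ such that every $\omega\in\mathfrak{M}_{xy}(\mathcal{U})$ with $\omega|_A=\lambda$ and $\pi_x(\omega)=\mu$ satisfies $\pi_y(\omega)=\nu$; $\mu\geq_{\mathbb{E}}\nu$ means this for some small $A$. A global measure $\mu\in\mathfrak{M}_x(\mathcal{U})$ is invariant over $A$ if $\mu(\varphi(x,b))=\mu(\varphi(x,c))$ for every $\varphi(x,z)\in\mathcal{L}_{xz}(\emptyset)$ and $b,c\in\mathcal{U}^z$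 with $\operatorname{tp}(b/A)=\operatorname{tp}(c/A)$; $\mu$ is invariant if it is invariant over some small $A$. *)

From Stdlib Require Import Reals.
From mathcomp Require Import all_boot.

Set Implicit Arguments.
Unset Strict Implicit.
Unset Printing Implicit Defensive.

Record language := Language {
  fsym : Type; farity : fsym -> nat;
  rsym : Type; rarity : rsym -> nat }.

Inductive term (L : language) (n : nat) : Type :=
| tvar : 'I_n -> term L n
| tfun (f : fsym L) : ('I_(farity f) -> term L n) -> term L n.

Inductive form (L : language) : nat -> Type :=
| feq n : term L n -> term L n -> form L n
| frel n (r : rsym L) : ('I_(rarity r) -> term L n) -> form L n
| ffalse n : form L n
| fneg n : form L n -> form L n
| fand n : form L n -> form L n -> form L n
| fex n : form L n.+1 -> form L n.

Record structure (L : language) := Structure {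
  carrier :> Type;
  finterp : forall f : fsym L, ('I_(farity f) -> carrier) -> carrier;
  rinterp : forall r : rsym L, ('I_(rarity r) -> carrier) -> Prop }.

Fixpoint eval L (M : structure L) n (e : 'I_n -> M) (t : term L n) {struct t} : M :=
  match t with
  | tvar i => e i
  | tfun f ts => @finterp _ M f (fun i => eval e (ts i))
  end.

(* extend an assignment by a new last variable (index n) *)
Definition ext (M : Type) n (e : 'I_n -> M) (u : M) : 'I_n.+1 -> M :=
  fun i => if unlift ord_max i is Some j then e j else u.

Fixpoint sat L (M : structure L) n (phi : form L n) {struct phi} : ('I_n -> M) -> Prop :=
  match phi in form _ k return ('I_k -> M) -> Prop with
  | feq _ t1 t2 => fun e => eval e t1 = eval e t2
  | frel _ r ts => fun e => @rinterp _ M r (fun i => eval e (ts i))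
  | ffalse _ => fun _ => False
  | fneg _ p => fun e => ~ sat p e
  | fand _ p q => fun e => sat p e /\ sat q e
  | fex _ p => fun e => exists u, sat p (ext e u)
  end.

(* concatenation of tuples (x-variables first, then parameter variables) *)
Definition tcat (M : Type) n k (a : 'I_n -> M) (c : 'I_k -> M) : 'I_(n + k) -> M :=
  fun i => match split i with inl j => a j | inr j => c j end.

(** * Definable sets = formulas with parameters modulo T = Th(U) *)

Section Monster.
Variables (L : language) (M : structure L).

Definition defset n k (phi : form L (n + k)) (c : 'I_k -> M) : ('I_n -> M) -> Prop :=
  fun a => sat phi (tcat a c).

Definition definable n (C : M -> Prop) (S : ('I_n -> M) -> Prop) : Prop :=
  exists k (phi : form L (n + k)) (c : 'I_k -> M),
    (forall i, C (c i)) /\ S = defset phi c.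

Definition allM : M -> Prop := fun _ => True.

(* finitely additive probability measure on L_x(C) (values outside
   the C-definable sets are irrelevant) *)
Definition keisler n (C : M -> Prop) (m : (('I_n -> M) -> Prop) -> R) : Prop :=
  m (fun _ => True) = R1 /\
  (forall S, definable C S -> Rle R0 (m S)) /\
  (forall S T, definable C S -> definable C T ->
     (forall a, S a -> T a -> False) ->
     m (fun a => S a \/ T a) = Rplus (m S) (m T)).

Definition agree n (C : M -> Prop) (m1 m2 : (('I_n -> M) -> Prop) -> R) : Prop :=
  forall S, definable C S -> m1 S = m2 S.

Definition proj_x n p (w : (('I_(n + p) -> M) -> Prop) -> R)
  : (('I_n -> M) -> Prop) -> R :=
  fun S => w (fun v => S (fun i => v (lshift p i))).

Definition proj_y n p (w : (('I_(n + p) -> M) -> Prop) -> R)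
  : (('I_p -> M) -> Prop) -> R :=
  fun S => w (fun v => S (fun j => v (rshift n j))).

Definition same_type (A : M -> Prop) k (b c : 'I_k -> M) : Prop :=
  forall l (psi : form L (k + l)) (a : 'I_l -> M), (forall i, A (a i)) ->
    (sat psi (tcat b a) <-> sat psi (tcat c a)).

Definition invariant_over (A : M -> Prop) n (mu : (('I_n -> M) -> Prop) -> R) : Prop :=
  forall k (phi : form L (n + k)) (b c : 'I_k -> M),
    same_type A b c -> mu (defset phi b) = mu (defset phi c).

Definition geE (A : M -> Prop) n p (mu : (('I_n -> M) -> Prop) -> R)
    (nu : (('I_p -> M) -> Prop) -> R) : Prop :=
  exists lam : (('I_(n + p) -> M) -> Prop) -> R,
    keisler A lam /\ agree A (proj_x lam) mu /\
    forall w : (('I_(n + p) -> M) -> Prop) -> R,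
      keisler allM w -> agree A w lam -> agree allM (proj_x w) mu ->
      agree allM (proj_y w) nu.

Definition card_lt (T K : Type) : Prop :=
  (exists f : T -> K, injective f) /\ ~ (exists g : K -> T, injective g).

Definition small (kappa : Type) (A : M -> Prop) : Prop := card_lt {x | A x} kappa.

Definition measure_invariant (kappa : Type) n (mu : (('I_n -> M) -> Prop) -> R) : Prop :=
  exists A, small kappa A /\ invariant_over A mu.

Definition geE_some (kappa : Type) n p (mu : (('I_n -> M) -> Prop) -> R)
    (nu : (('I_p -> M) -> Prop) -> R) : Prop :=
  exists A, small kappa A /\ geE A mu nu.

Definition pform n := {k : nat & (form L (n + k) * ('I_k -> M))%type}.
Definition holds n (q : pform n) (a : 'I_n -> M) : Prop :=
  sat (projT2 q).1 (tcat a (projT2 q).2).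

Definition saturated (kappa : Type) : Prop :=
  forall (A : M -> Prop), small kappa A -> forall n (p : pform n -> Prop),
    (forall q, p q -> forall i, A ((projT2 q).2 i)) ->
    (forall s : seq (pform n), (forall q, List.In q s -> p q) ->
       exists a, forall q, List.In q s -> holds q a) ->
    exists a, forall q, p q -> holds q a.

Definition automorphism (s : M -> M) : Prop :=
  bijective s /\
  (forall f args, s (@finterp _ M f args) = @finterp _ M f (fun i => s (args i))) /\
  (forall r args, @rinterp _ M r args <-> @rinterp _ M r (fun i => s (args i))).

Definition elementary_on (A : M -> Prop) (f : M -> M) : Prop :=
  forall k (phi : form L k) (a : 'I_k -> M), (forall i, A (a i)) ->
    (sat phi a <-> sat phi (fun i => f (a i))).

Definition strongly_homogeneous (kappa : Type) : Prop :=
  forall (A : M -> Prop) (f : M -> M), small kappa A -> elementary_on A f ->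
    exists s, automorphism s /\ forall x, A x -> s x = f x.

(* M is a monster model (of its complete theory T = Th(M)) relative to the
   cardinal kappa (represented by a type): kappa infinite, |L| < kappa,
   M kappa-saturated and strongly kappa-homogeneous. *)
Definition monster (kappa : Type) : Prop :=
  (exists f : nat -> kappa, injective f) /\
  card_lt (fsym L + rsym L) kappa /\
  saturated kappa /\ strongly_homogeneous kappa.

End Monster.

From Pilot Require Import Defs.
From Stdlib Require Import Reals Lra.
From Stdlib Require List FinFun.
From HB Require Import structures.
From mathcomp Require Import all_boot boolp.
From mathcomp Require classical_sets.

Set Implicit Arguments.
Unset Strict Implicit.
Unset Printing Implicit Defensive.

Local Open Scope R_scope.

HB.instance Definition _ := Monoid.isComLaw.Build R 0 Rplus
  (fun x y z => esym (Rplus_assoc x y z)) Rplus_comm Rplus_0_l.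
HB.instance Definition _ := Monoid.isMulLaw.Build R 0 Rmult Rmult_0_l Rmult_0_r.
HB.instance Definition _ :=
  Monoid.isAddLaw.Build R Rmult Rplus Rmult_plus_distr_r Rmult_plus_distr_l.

Local Notation "\sum_ ( i <- r ) F" := (\big[Rplus/0]_(i <- r) F) : R_scope.

Lemma set_ext (V : Type) (S T : V -> Prop) : (forall v, S v <-> T v) -> S = T.
Proof. by move=> ST; apply: funext => v; apply: propext. Qed.

Lemma sum_cat (I : Type) (r1 r2 : seq I) (F : I -> R) :
  \sum_(i <- r1 ++ r2) F i = \sum_(i <- r1) F i + \sum_(i <- r2) F i.
Proof. exact: big_cat. Qed.

Lemma ler_sum_in (I : Type) (r : seq I) (F G : I -> R) :
  (forall i, List.In i r -> F i <= G i) -> \sum_(i <- r) F i <= \sum_(i <- r) G i.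
Proof.
elim: r => [|i r IH] FG; rewrite ?big_nil ?big_cons; first lra.
apply: Rplus_le_compat; [apply: FG; left | apply: IH => j rj; apply: FG; right] => //.
Qed.

Lemma sum_ge0_in (I : Type) (r : seq I) (F : I -> R) :
  (forall i, List.In i r -> 0 <= F i) -> 0 <= \sum_(i <- r) F i.
Proof.
move=> F0; apply: Rle_trans (ler_sum_in (F := fun=> 0) F0).
by rewrite big1 //; apply: Rle_refl.
Qed.

Lemma eq_sum_in (I : Type) (r : seq I) (F G : I -> R) :
  (forall i, List.In i r -> F i = G i) -> \sum_(i <- r) F i = \sum_(i <- r) G i.
Proof.
elim: r => [|i r IH] FG; rewrite ?big_nil ?big_cons //.
rewrite FG; last by left.
by rewrite IH // => j rj; apply: FG; right.
Qed.

Section Indicator.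
Variable V : Type.
Implicit Types (S E : V -> Prop) (v : V) (ds : seq (R * (V -> Prop))).

Definition indic S v : R := if pselect (S v) then 1 else 0.

Lemma indic_in S v : S v -> indic S v = 1.
Proof. by rewrite /indic; case: pselect. Qed.

Lemma indic_out S v : ~ S v -> indic S v = 0.
Proof. by rewrite /indic; case: pselect. Qed.

Lemma indic_bound S v : 0 <= indic S v <= 1.
Proof. by rewrite /indic; case: pselect => ? /=; lra. Qed.

Lemma indicI S E v : indic (fun w => S w /\ E w) v = indic S v * indic E v.
Proof.
rewrite /indic; case: (pselect (S v /\ E v)); case: (pselect (S v));
  case: (pselect (E v)) => /= *; by [lra | tauto].
Qed.

Lemma indicU S E v : (S v -> E v -> False) ->
  indic (fun w => S w \/ E w) v = indic S v + indic E v.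
Proof.
rewrite /indic; case: (pselect (S v \/ E v)); case: (pselect (S v));
  case: (pselect (E v)) => /= *; by [lra | tauto].
Qed.

Lemma indic_split S E v :
  indic (fun w => S w /\ E w) v + indic (fun w => S w /\ ~ E w) v = indic S v.
Proof.
rewrite /indic; case: (pselect (S v /\ E v)); case: (pselect (S v /\ ~ E v));
  case: (pselect (S v)); case: (pselect (E v)) => /= *; by [lra | tauto].
Qed.

Definition step ds v : R := \sum_(e <- ds) e.1 * indic e.2 v.

Lemma step_cons e ds v : step (e :: ds) v = e.1 * indic e.2 v + step ds v.
Proof. by rewrite /step big_cons. Qed.

Definition multiplicity ds v : R := \sum_(e <- ds) indic e.2 v.

Lemma step_out ds v : (forall e, List.In e ds -> ~ e.2 v) -> step ds v = 0.
Proof.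
rewrite /step; elim: ds => [|e ds IH] out; rewrite ?big_nil ?big_cons //.
rewrite indic_out ?IH => [|e' ?|]; [lra | apply: out; right | apply: out; left] => //.
Qed.

Lemma multiplicity_ge_ind ds e v : List.In e ds -> indic e.2 v <= multiplicity ds v.
Proof.
rewrite /multiplicity; elim: ds => [[]|a ds IH] /= [ae|eds]; rewrite big_cons.
- subst a; have : 0 <= \sum_(e <- ds) indic e.2 v.
    by apply: sum_ge0_in => i _; case: (indic_bound i.2 v).
  lra.
- have := IH eds; have := indic_bound a.2 v; lra.
Qed.

Lemma multiplicity_out ds v : (forall e, List.In e ds -> ~ e.2 v) -> multiplicity ds v = 0.
Proof.
rewrite /multiplicity; elim: ds => [|e ds IH] out; rewrite ?big_nil ?big_cons //.
rewrite indic_out ?IH => [|e' ?|]; [lra | apply: out; right | apply: out; left] => //.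
Qed.

Lemma multiplicity_cover ds v :
  multiplicity ds v = 1 -> exists e, List.In e ds /\ e.2 v.
Proof.
move=> m1; apply: contrapT => none.
have : multiplicity ds v = 0 by apply: multiplicity_out => e eds ev; apply: none; exists e.
lra.
Qed.

Lemma step_disjoint ds e v :
  List.In e ds -> e.2 v -> multiplicity ds v <= 1 -> step ds v = e.1.
Proof.
rewrite /step /multiplicity; elim: ds => [[]|a ds IH] /= [ae|eds] ev;
  rewrite !big_cons.
- subst a; rewrite indic_in //= => m1.
  have -> : \sum_(e <- ds) e.1 * indic e.2 v = 0.
    apply: step_out => e' e'ds e'v.
    have := multiplicity_ge_ind v e'ds; rewrite indic_in /multiplicity //; lra.
  lra.
- have := multiplicity_ge_ind v eds; rewrite indic_in // /multiplicity => m1 m2.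
  have /indic_out a0 : ~ a.2 v by move=> /indic_in; lra.
  rewrite a0 IH //; lra.
Qed.

End Indicator.

Definition set_algebra (V : Type) (B : (V -> Prop) -> Prop) : Prop :=
  [/\ B (fun _ => True),
      forall S, B S -> B (fun v => ~ S v) &
      forall S T, B S -> B T -> B (fun v => S v /\ T v)].

Definition fa_prob (V : Type) (B : (V -> Prop) -> Prop) (m : (V -> Prop) -> R) : Prop :=
  m (fun _ => True) = 1 /\ (forall S, B S -> 0 <= m S) /\
  (forall S T, B S -> B T -> (forall v, S v -> T v -> False) ->
     m (fun v => S v \/ T v) = m S + m T).

Definition step_int (V : Type) (m : (V -> Prop) -> R) (ds : seq (R * (V -> Prop)))
    (S : V -> Prop) : R :=
  \sum_(e <- ds) e.1 * m (fun v => e.2 v /\ S v).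

Lemma step_intT (V : Type) (m : (V -> Prop) -> R) ds :
  step_int m ds (fun _ => True) = \sum_(e <- ds) e.1 * m e.2.
Proof.
by apply: eq_bigr => e _; congr (e.1 * m _); apply: set_ext => v; tauto.
Qed.

Lemma fa_prob_sub (V : Type) (B B' : (V -> Prop) -> Prop) m :
  (forall S, B S -> B' S) -> fa_prob B' m -> fa_prob B m.
Proof.
move=> BB' [m1 [m0 mU]]; split=> //; split=> [S BS|S T BS BT].
  exact: m0 (BB' _ BS).
exact: mU (BB' _ BS) (BB' _ BT).
Qed.

Lemma fa_prob_comap (V V' : Type) (f : V -> V') (m : (V -> Prop) -> R) :
  fa_prob (fun _ => True) m -> fa_prob (fun _ => True) (fun S => m (fun v => S (f v))).
Proof.
move=> [m1 [m0 mU]]; split; first exact: m1.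
split=> [S _|S T _ _ disj]; first exact: m0.
exact: mU I I (fun v => disj (f v)).
Qed.

Section FAProb.
Variables (V : Type) (B : (V -> Prop) -> Prop) (m : (V -> Prop) -> R).
Hypotheses (HB : set_algebra B) (Hm : fa_prob B m).
Implicit Types (S E : V -> Prop) (ds : seq (R * (V -> Prop))).

Lemma algebraT : B (fun _ => True). Proof. by case: HB. Qed.

Lemma algebraN S : B S -> B (fun v => ~ S v). Proof. by case: HB => _ + _; apply. Qed.

Lemma algebraI S E : B S -> B E -> B (fun v => S v /\ E v).
Proof. by case: HB => _ _; apply. Qed.

Lemma algebraU S E : B S -> B E -> B (fun v => S v \/ E v).
Proof.
move=> BS BE; have := algebraN (algebraI (algebraN BS) (algebraN BE)).
by congr B; apply: set_ext => v; tauto.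
Qed.

Lemma algebra0 : B (fun _ => False).
Proof. by have := algebraN algebraT; congr B; apply: set_ext => v; tauto. Qed.

Lemma algebra_bigU ds : (forall e, List.In e ds -> B e.2) ->
  B (fun v => exists2 e, List.In e ds & e.2 v).
Proof.
elim: ds => [|a ds IH] Bds.
  by have := algebra0; congr B; apply: set_ext => v; split=> // -[].
have := algebraU (Bds a (or_introl erefl)) (IH (fun e eds => Bds e (or_intror eds))).
congr B; apply: set_ext => v /=; split=> [[av|[e eds ev]]|[e [<-|eds] ev]].
- by exists a; [left|].
- by exists e; [right|].
- by left.
- by right; exists e.
Qed.

Lemma fa_prob1 : m (fun _ => True) = 1. Proof. by case: Hm. Qed.

Lemma fa_prob_ge0 S : B S -> 0 <= m S. Proof. by case: Hm => _ [+ _]; apply. Qed.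

Lemma fa_probU S E : B S -> B E -> (forall v, S v -> E v -> False) ->
  m (fun v => S v \/ E v) = m S + m E.
Proof. by case: Hm => _ [_]; apply. Qed.

Lemma fa_prob_empty S : (forall v, ~ S v) -> m S = 0.
Proof.
move=> S0; have -> : S = (fun _ => False) by apply: set_ext => v; split=> // /S0.
have := fa_probU algebra0 algebra0 (fun _ f _ => f).
have -> : (fun v : V => False \/ False) = (fun _ => False) by apply: set_ext => v; tauto.
lra.
Qed.

Lemma fa_prob_inhabited : inhabited V.
Proof.
apply: contrapT => noV; have := fa_prob1.
rewrite fa_prob_empty => [|v _]; [lra | exact: noV (inhabits v)].
Qed.

Lemma fa_prob_split S E : B S -> B E ->
  m S = m (fun v => S v /\ E v) + m (fun v => S v /\ ~ E v).
Proof.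
move=> BS BE; rewrite -fa_probU; [| exact: algebraI | exact: algebraI (algebraN BE) |].
  by congr m; apply: set_ext => v; case: (pselect (E v)); tauto.
by move=> v [_ ?] [].
Qed.


Lemma fa_prob_sum_disjoint ds S : (forall e, List.In e ds -> B e.2) -> B S ->
  (forall v, multiplicity ds v <= 1) ->
  \sum_(e <- ds) m (fun v => e.2 v /\ S v) =
  m (fun v => S v /\ exists2 e, List.In e ds & e.2 v).
Proof.
move=> + BS; elim: ds => [|a ds IH] Bds disj.
  by rewrite big_nil fa_prob_empty // => v [_ []].
have Bds' e : List.In e ds -> B e.2 by move=> eds; apply: Bds; right.
have disj' v : multiplicity ds v <= 1.
  by have := disj v; rewrite /multiplicity big_cons; have := indic_bound a.2 v; lra.
rewrite big_cons IH // -fa_probU.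
- congr m; apply: set_ext => v.
  split=> [[[av Sv]|[Sv [e eds ev]]]|[Sv [e [<-|eds] ev]]].
  + by split => //; exists a; [left|].
  + by split => //; exists e; [right|].
  + by left.
  + by right; split => //; exists e.
- by apply: algebraI => //; apply: Bds; left.
- by apply: algebraI => //; apply: algebra_bigU.
- move=> v [av _] [_ [e eds ev]].
  have := disj v; rewrite /multiplicity big_cons indic_in //.
  have := multiplicity_ge_ind v eds; rewrite indic_in // /multiplicity; lra.
Qed.

Lemma step_int_split ds S P : (forall e, List.In e ds -> B e.2) -> B S -> B P ->
  step_int m ds S =
  step_int m ds (fun v => S v /\ P v) + step_int m ds (fun v => S v /\ ~ P v).
Proof.
move=> Bds BS BP; rewrite /step_int -big_split /=; apply: eq_sum_in => e eds.
rewrite -Rmult_plus_distr_l (@fa_prob_split _ P) //; last exact: algebraI (Bds _ eds) BS.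
by congr (e.1 * (m _ + m _)); apply: set_ext => v; tauto.
Qed.

Lemma step_int_le ks E c : (forall k, List.In k ks -> B k.2) -> B E ->
  (forall v, E v -> step ks v <= c) -> step_int m ks E <= c * m E.
Proof.
elim: ks E c => [|[b E0] ks IH] E c Bks BE bound.
  rewrite /step_int big_nil; have [[v Ev]|noE] := pselect (exists v, E v).
    have := bound v Ev; rewrite /step big_nil => c0.
    by apply: Rmult_le_pos => //; apply: fa_prob_ge0.
  by rewrite fa_prob_empty => [|v Ev]; [lra | apply: noE; exists v].
have BE0 : B E0 by apply: (Bks (b, E0)); left.
have Bks' k : List.In k ks -> B k.2 by move=> kks; apply: Bks; right.
rewrite /step_int big_cons -/(step_int m ks E) (step_int_split Bks' BE BE0) /=.
rewrite (fa_prob_split BE BE0).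
have -> : m (fun v => E0 v /\ E v) = m (fun v => E v /\ E0 v).
  by congr m; apply: set_ext => v; tauto.
have := IH (fun v => E v /\ E0 v) (c - b) Bks' (algebraI BE BE0).
have := IH (fun v => E v /\ ~ E0 v) c Bks' (algebraI BE (algebraN BE0)).
have bound' v : E v -> b * indic E0 v + step ks v <= c.
  by move=> /bound; rewrite step_cons.
have out_E0 v : E v /\ ~ E0 v -> step ks v <= c.
  by move=> [Ev nE0v]; have := bound' v Ev; rewrite (indic_out nE0v); lra.
have in_E0 v : E v /\ E0 v -> step ks v <= c - b.
  by move=> [Ev E0v]; have := bound' v Ev; rewrite (indic_in E0v); lra.
move=> /(_ out_E0) + /(_ in_E0); nra.
Qed.

End FAProb.

Lemma chain_list_bound (T : Type) (F : (T -> Prop) -> Prop) (G : T -> Prop) (l : seq T) :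
  (forall A1 A2, F A1 -> F A2 -> (forall x, A1 x -> A2 x) \/ (forall x, A2 x -> A1 x)) ->
  (forall x, List.In x l -> G x \/ exists2 A, F A & A x) ->
  (forall x, List.In x l -> G x) \/ exists2 A, F A & forall x, List.In x l -> G x \/ A x.
Proof.
move=> chainF; elim: l => [|x l IH] lFG; first by left.
have [lG|[A FA lA]] := IH (fun y yl => lFG y (or_intror yl)).
- case: (lFG x (or_introl erefl)) => [Gx|[A FA Ax]].
    by left=> y [<-|yl]; [|apply: lG].
  by right; exists A => // y [<-|yl]; [right | left; apply: lG].
- case: (lFG x (or_introl erefl)) => [Gx|[A' FA' A'x]].
    by right; exists A => // y [<-|yl]; [left | apply: lA].
  have [AA'|A'A] := chainF A A' FA FA'.
    by right; exists A' => // y [<-|/lA [|/AA']]; [right | left | right].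
  by right; exists A => // y [<-|/lA]; [right; apply: A'A | ].
Qed.

Section Extension.
Variable V : Type.

Definition lcomb (l : seq (R * ((V -> Prop) * R))) (F : (V -> Prop) * R -> R) : R :=
  \sum_(e <- l) e.1 * F e.2.

Definition consistent (G : (V -> Prop) * R -> Prop) : Prop :=
  forall l t, (forall e, List.In e l -> G e.2) ->
  (forall v, lcomb l (fun q => indic q.1 v) <= t) -> lcomb l snd <= t.

Lemma lcomb_cons e l F : lcomb (e :: l) F = e.1 * F e.2 + lcomb l F.
Proof. by rewrite /lcomb big_cons. Qed.

Lemma lcomb_cat l1 l2 F : lcomb (l1 ++ l2) F = lcomb l1 F + lcomb l2 F.
Proof. by rewrite /lcomb big_cat. Qed.

Lemma lcomb_scale c l F : lcomb [seq (c * e.1, e.2) | e <- l] F = c * lcomb l F.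
Proof.
by rewrite /lcomb big_map big_distrr; apply: eq_bigr => e _ /=; rewrite Rmult_assoc.
Qed.

Lemma consistent_eq G l c :
  consistent G -> (forall e, List.In e l -> G e.2) ->
  (forall v, lcomb l (fun q => indic q.1 v) = c) -> lcomb l snd = c.
Proof.
move=> cG lG lc; apply: Rle_antisym; first by apply: cG => // v; rewrite lc; lra.
suff : lcomb [seq (-1 * e.1, e.2) | e <- l] snd <= - c by rewrite lcomb_scale; lra.
apply: cG => [e /List.in_map_iff [e' [<- /lG]] //|v].
by rewrite lcomb_scale lc; lra.
Qed.

Lemma consistent_sub G G' : (forall q, G q -> G' q) -> consistent G' -> consistent G.
Proof. by move=> GG' cG' l t lG; apply: cG' => e /lG /GG'. Qed.

Lemma lcomb_extract G q l : (forall e, List.In e l -> G e.2 \/ e.2 = q) ->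
  exists l' b, (forall e, List.In e l' -> G e.2) /\
    forall F, lcomb l F = lcomb l' F + b * F q.
Proof.
elim: l => [|e l IH] lGq.
  by exists [::], 0 => //; split=> // F; rewrite /lcomb big_nil; lra.
have [l' [b [l'G ll']]] := IH (fun e' e'l => lGq e' (or_intror e'l)).
case: (lGq e (or_introl erefl)) => [Ge|eq].
  exists (e :: l'), b; split=> [e' [<-|/l'G]|F] //.
  by rewrite !lcomb_cons ll'; lra.
exists l', (b + e.1); split=> // F.
by rewrite lcomb_cons ll' eq; lra.
Qed.

Lemma consistent_add G q : consistent G ->
  (forall l b t, (forall e, List.In e l -> G e.2) ->
     (forall v, lcomb l (fun q => indic q.1 v) + b * indic q.1 v <= t) ->
     lcomb l snd + b * q.2 <= t) ->
  consistent (fun q' => G q' \/ q' = q).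
Proof.
move=> cG crit l t lGq bound.
have [l' [b [l'G ll']]] := lcomb_extract lGq.
by rewrite ll'; apply: crit => // v; rewrite -ll'.
Qed.

Lemma consistent_extend1 G S : consistent G -> exists r, consistent (fun q => G q \/ q = (S, r)).
Proof.
move=> cG.
pose below z := exists l t, (forall e, List.In e l -> G e.2) /\
  (forall v, lcomb l (fun q => indic q.1 v) - indic S v <= t) /\ z = lcomb l snd - t.
have below_above z l t : below z -> (forall e, List.In e l -> G e.2) ->
    (forall v, lcomb l (fun q => indic q.1 v) + indic S v <= t) -> z <= t - lcomb l snd.
  move=> [l1 [t1 [l1G [l1t ->]]]] lG lt.
  have : lcomb (l1 ++ l) snd <= t1 + t.
    apply: cG => [e /(List.in_app_or l1 l) [/l1G|/lG] //|v].
    by rewrite lcomb_cat; have := l1t v; have := lt v; lra.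
  by rewrite lcomb_cat; lra.
have below_bounded : bound below.
  exists 1 => z /(below_above z [::] 1).
  rewrite /lcomb big_nil Rminus_0_r; apply=> // v.
  rewrite big_nil; have := indic_bound S v; lra.
have below_ne : exists z, below z.
  exists 0, [::], 0; split=> //; split=> [v|]; rewrite /lcomb !big_nil; last lra.
  have := indic_bound S v; lra.
have [r [rub rlub]] := completeness below below_bounded below_ne.
exists r; apply: consistent_add => // l b t lG /= bound.
have [b0|[b0|b0]] := Rtotal_order b 0.
- have binv : / - b * - b = 1 by field; lra.
  have binv0 : 0 < / - b by apply: Rinv_0_lt_compat; lra.
  have below_l : below (/ - b * lcomb l snd - / - b * t).
    exists [seq (/ - b * e.1, e.2) | e <- l], (/ - b * t); split.
      by move=> e /List.in_map_iff [e' [<- /lG]].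
    split=> [v|]; rewrite lcomb_scale //.
    have -> : / - b * lcomb l (fun q => indic q.1 v) - indic S v =
              / - b * (lcomb l (fun q => indic q.1 v) + b * indic S v) by field; lra.
    by apply: Rmult_le_compat_l; [lra | apply: bound].
  have := rub _ below_l; rewrite -Rmult_minus_distr_l => below_r.
  have : lcomb l snd - t <= - b * r.
    have -> : lcomb l snd - t = - b * (/ - b * (lcomb l snd - t)) by field; lra.
    by apply: Rmult_le_compat_l; lra.
  lra.
- subst b; have : lcomb l snd <= t by apply: cG => // v; have := bound v; lra.
  lra.
- have binv : / b * b = 1 by field; lra.
  have binv0 : 0 < / b by apply: Rinv_0_lt_compat; lra.
  suff /rlub r_above : is_upper_bound below (/ b * (t - lcomb l snd)).
    have : b * r <= t - lcomb l snd.
      have -> : t - lcomb l snd = b * (/ b * (t - lcomb l snd)) by field; lra.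
      by apply: Rmult_le_compat_l; lra.
    lra.
  move=> z /(below_above z [seq (/ b * e.1, e.2) | e <- l] (/ b * t)).
  rewrite lcomb_scale Rmult_minus_distr_l; apply=> [e /List.in_map_iff [e' [<- /lG]] //|v].
  rewrite lcomb_scale.
  have -> : / b * lcomb l (fun q => indic q.1 v) + indic S v =
            / b * (lcomb l (fun q => indic q.1 v) + b * indic S v) by field; lra.
  by apply: Rmult_le_compat_l; [lra | apply: bound].
Qed.

Lemma consistent_fa_prob seed : consistent seed ->
  exists w, fa_prob (fun _ => True) w /\ forall S r, seed (S, r) -> w S = r.
Proof.
move=> cseed; pose P A := consistent (fun q => seed q \/ A q).
have [A [PA Amax]] : exists A, P A /\ forall A', classical_sets.proper A A' -> ~ P A'.
  apply: classical_sets.Zorn_bigcup => F FP chainF l t lF.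
  have lF' q : List.In q (map snd l) -> seed q \/ exists2 A, F A & A q.
    by move=> /List.in_map_iff [e [<- /lF]] [|[A FA Ae]]; [left | right; exists A].
  have [lseed|[A FA lA]] := chain_list_bound chainF lF'.
  - by apply: cseed => e el; apply: lseed; apply: List.in_map.
  - by apply: (FP A FA) => e el; apply: lA; apply: List.in_map.
pose G q := seed q \/ A q.
have total S : exists r, G (S, r).
  have [r cr] := consistent_extend1 S PA; exists r.
  apply: contrapT => notG; apply: (Amax (fun q => A q \/ q = (S, r))).
    by split=> [q Aq|sub]; [left | apply: notG; right; apply: sub; right].
  by apply: consistent_sub cr => q [?|[?|?]]; [left; left | left; right | right].
pose w S := proj1_sig (cid (total S)).
have Gw S : G (S, w S) by exact: proj2_sig (cid (total S)).
have lcomb2 a b F : lcomb [:: a; b] F = a.1 * F a.2 + b.1 * F b.2.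
  by rewrite /lcomb !big_cons big_nil; lra.
have G_unique S r1 r2 : G (S, r1) -> G (S, r2) -> r1 = r2.
  move=> G1 G2; suff : 1 * r1 + -1 * r2 = 0 by lra.
  rewrite -(lcomb2 (1, (S, r1)) (-1, (S, r2)) snd).
  apply: (consistent_eq PA) => [e [<-|[<-|[]]] /=|v]; [exact: G1 | exact: G2 |].
  by rewrite lcomb2 /=; lra.
exists w; split; last by move=> S r seedS; apply: G_unique; [exact: Gw | left].
have lcomb1 a F : lcomb [:: a] F = a.1 * F a.2 by rewrite /lcomb big_cons big_nil; lra.
split; last split.
- have : lcomb [:: (1, (fun _ => True, w (fun _ => True)))] snd = 1.
    apply: (consistent_eq PA) => [e [<-|[]]|v]; first exact: Gw.
    by rewrite lcomb1 indic_in //=; lra.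
  by rewrite lcomb1 /=; lra.
- move=> S _; have : lcomb [:: (-1, (S, w S))] snd <= 0.
    apply: PA => [e [<-|[]]|v]; first exact: Gw.
    by rewrite lcomb1 /=; have := indic_bound S v; lra.
  by rewrite lcomb1 /=; lra.
- move=> S T _ _ disj; pose U := fun v => S v \/ T v.
  have : lcomb [:: (1, (U, w U)); (-1, (S, w S)); (-1, (T, w T))] snd = 0.
    apply: (consistent_eq PA) => [e [<-|[<-|[<-|[]]]]|v]; try exact: Gw.
    by rewrite /lcomb !big_cons big_nil /= indicU //=; [lra | apply: disj].
  by rewrite /lcomb !big_cons big_nil /U /=; lra.
Qed.

End Extension.

Lemma max_split (T : Type) (ds : seq (R * T)) : ds <> [::] ->
  exists ds1 e ds2, ds = ds1 ++ e :: ds2 /\ forall e', List.In e' ds -> e'.1 <= e.1.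
Proof.
elim: ds => [//|a ds IH] _; case: ds IH => [|b ds] IH.
  by exists [::], a, [::]; split=> // e' [<-|[]]; lra.
have [ds1 [e [ds2 [dsE emax]]]] := IH (@List.nil_cons _ b ds \o esym).
case: (Rle_dec a.1 e.1) => [ae|ea].
  by exists (a :: ds1), e, ds2; split=> [|e' [<-|/emax]] //; rewrite dsE.
by exists [::], a, (b :: ds); split=> // e' [<-|/emax]; lra.
Qed.

Definition refine (V : Type) (ds : seq (R * (V -> Prop))) (a : R) (S : V -> Prop) :=
  [seq (e.1 + a, fun v => e.2 v /\ S v) | e <- ds] ++
  [seq (e.1, fun v => e.2 v /\ ~ S v) | e <- ds].

Section Refine.
Variables (V : Type) (B : (V -> Prop) -> Prop) (m : (V -> Prop) -> R).
Hypotheses (HB : set_algebra B) (Hm : fa_prob B m).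
Variables (ds : seq (R * (V -> Prop))) (a : R) (S : V -> Prop).
Hypotheses (Bds : forall e, List.In e ds -> B e.2) (BS : B S).
Hypothesis ds_partition : forall v, multiplicity ds v = 1.

Lemma refine_algebra e : List.In e (refine ds a S) -> B e.2.
Proof.
move=> /(List.in_app_or _ _ e) [] /List.in_map_iff [e' [<- /Bds Be']] /=.
  exact: algebraI.
exact: algebraI (algebraN HB BS).
Qed.

Lemma sum_refine (F G : R * (V -> Prop) -> R) :
  (forall e, List.In e ds ->
     G e = F (e.1 + a, fun v => e.2 v /\ S v) + F (e.1, fun v => e.2 v /\ ~ S v)) ->
  \sum_(e <- refine ds a S) F e = \sum_(e <- ds) G e.
Proof. by move=> FG; rewrite (eq_sum_in FG) big_split big_cat !big_map. Qed.

Lemma refine_partition v : multiplicity (refine ds a S) v = 1.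
Proof.
rewrite -(ds_partition v) /multiplicity; apply: sum_refine => e _.
by rewrite indic_split.
Qed.

Lemma refine_step v : step (refine ds a S) v = step ds v + a * indic S v.
Proof.
rewrite -[indic S v]Rmult_1_r -(ds_partition v) /step /multiplicity.
rewrite big_distrr big_distrr -big_split; apply: sum_refine => e _ /=.
have -> : indic S v * indic e.2 v = indic (fun w => e.2 w /\ S w) v.
  by rewrite indicI Rmult_comm.
rewrite -(indic_split e.2 S v); ring.
Qed.

Lemma refine_value :
  \sum_(e <- refine ds a S) e.1 * m e.2 = \sum_(e <- ds) e.1 * m e.2 + a * m S.
Proof.
have cover : m S = m (fun v => S v /\ exists2 e, List.In e ds & e.2 v).
  congr m; apply: set_ext => v; split=> [Sv|[]//]; split=> //.
  by have [e [eds ev]] := multiplicity_cover (ds_partition v); exists e.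
rewrite cover -(fa_prob_sum_disjoint HB Hm Bds BS) => [|v]; last by rewrite ds_partition; lra.
rewrite big_distrr -big_split; apply: sum_refine => e eds /=.
rewrite {1}(fa_prob_split HB Hm (Bds eds) BS); ring.
Qed.

End Refine.

Section Amalgamation.
Variables (V X : Type) (pr : V -> X).
Variables (BV : (V -> Prop) -> Prop) (BX BX0 : (X -> Prop) -> Prop).
Variables (lam : (V -> Prop) -> R) (mu : (X -> Prop) -> R).
Hypotheses (HBV : set_algebra BV) (HBX : set_algebra BX) (HBX0 : set_algebra BX0).
Hypotheses (Hlam : fa_prob BV lam) (Hmu : fa_prob BX mu).
Hypothesis BX0_sub : forall E, BX0 E -> BX E.
Hypothesis BV_cyl : forall E, BX0 E -> BV (fun v => E (pr v)).
Hypothesis BX0_proj : forall D, BV D -> BX0 (fun x => exists2 v, D v & pr v = x).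
Hypothesis pr_surj : forall x, exists v, pr v = x.
Hypothesis lam_mu : forall E, BX0 E -> lam (fun v => E (pr v)) = mu E.

Lemma step_int_le_max ds E c : (forall e, List.In e ds -> BV e.2) -> BX0 E ->
  (forall v, multiplicity ds v <= 1) ->
  (forall v, E (pr v) -> exists2 e, List.In e ds & e.2 v) ->
  (forall e, List.In e ds -> e.1 <= c) ->
  step_int lam ds (fun v => E (pr v)) <= c * mu E.
Proof.
move=> Bds BE disj cover cmax.
apply: (@Rle_trans _ (\sum_(e <- ds) c * lam (fun v => e.2 v /\ E (pr v)))).
  apply: ler_sum_in => e eds; apply: Rmult_le_compat_r; last exact: cmax.
  by apply: (fa_prob_ge0 Hlam); apply: algebraI (Bds _ eds) (BV_cyl BE).
rewrite -big_distrr (fa_prob_sum_disjoint HBV Hlam Bds (BV_cyl BE) disj) -lam_mu //.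
by right; congr (c * lam _); apply: set_ext => v; split=> [[]|Ev] //; split=> //; apply: cover.
Qed.

Lemma amalgam_greedy ks t : (forall k, List.In k ks -> BX k.2) ->
  forall n ds E, size ds = n -> (forall e, List.In e ds -> BV e.2) -> BX0 E ->
  (forall v, multiplicity ds v <= 1) ->
  (forall v, E (pr v) -> exists2 e, List.In e ds & e.2 v) ->
  (forall e v, List.In e ds -> e.2 v -> E (pr v) -> e.1 + step ks (pr v) <= t) ->
  step_int lam ds (fun v => E (pr v)) + step_int mu ks E <= t * mu E.
Proof.
move=> Bks; elim=> [|n IH] ds E size_ds Bds BE disj cover bound.
  have noE x : ~ E x by have [v <-] := pr_surj x => /cover [e]; rewrite (size0nil size_ds).
  have := step_int_le HBX Hmu (c := 0) Bks (BX0_sub BE) (fun x Ex => False_ind _ (noE x Ex)).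
  rewrite (size0nil size_ds) /step_int big_nil (fa_prob_empty HBX Hmu noE); lra.
have [|ds1 [[c D] [ds2 [dsE cmax]]]] := max_split (ds := ds).
  by move=> ds0; rewrite ds0 in size_ds.
have Dds : List.In (c, D) ds by rewrite dsE; apply: List.in_or_app; right; left.
pose P x := exists2 v, D v & pr v = x.
have BP : BX0 P by apply: BX0_proj; exact: (Bds _ Dds).
rewrite (step_int_split HBV Hlam Bds (BV_cyl BE) (BV_cyl BP)).
rewrite (step_int_split HBX Hmu Bks (BX0_sub BE) (BX0_sub BP)).
rewrite (fa_prob_split HBX Hmu (BX0_sub BE) (BX0_sub BP)).
have BEP : BX0 (fun x => E x /\ P x) by apply: algebraI.
have BEnP : BX0 (fun x => E x /\ ~ P x) by apply: algebraI => //; apply: algebraN.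
have on_P : step_int lam ds (fun v => E (pr v) /\ P (pr v)) <=
    c * mu (fun x => E x /\ P x).
  apply: (step_int_le_max Bds BEP disj) => [v [/cover]//|e /cmax //].
have on_P_ks : step_int mu ks (fun x => E x /\ P x) <= (t - c) * mu (fun x => E x /\ P x).
  apply: (step_int_le HBX Hmu Bks (BX0_sub BEP)) => x [Ex [v Dv vx]].
  by move: Ex; rewrite -vx => /(bound _ v Dds Dv) /=; lra.
have sub e : List.In e (ds1 ++ ds2) -> List.In e ds.
  by rewrite dsE => /(List.in_app_or _ _ e) [?|?]; apply: List.in_or_app; [left | right; right].
have off_P : step_int mu ks (fun x => E x /\ ~ P x) +
    step_int lam (ds1 ++ ds2) (fun v => E (pr v) /\ ~ P (pr v)) <= t * mu (fun x => E x /\ ~ P x).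
  rewrite Rplus_comm; apply: IH => //.
  - by move: size_ds; rewrite dsE !size_cat /= addnS => -[].
  - by move=> e /sub /Bds.
  - move=> v; have := disj v; rewrite /multiplicity dsE !sum_cat big_cons.
    by have := indic_bound (c, D).2 v; lra.
  - move=> v [/cover [e]]; rewrite dsE => /(List.in_app_or _ _ e) [e1|[<-|e2]] ev nP.
    + by exists e => //; apply: List.in_or_app; left.
    + by case: nP; exists v.
    + by exists e => //; apply: List.in_or_app; right.
  - by move=> e v /sub eds ev [Ev _]; apply: bound.
have -> : step_int lam ds (fun v => E (pr v) /\ ~ P (pr v)) =
    step_int lam (ds1 ++ ds2) (fun v => E (pr v) /\ ~ P (pr v)).
  rewrite dsE /step_int !sum_cat big_cons (fa_prob_empty HBV Hlam) => [|v [Dv [_ []]]] /=.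
    lra.
  by exists v.
nra.
Qed.

Definition amalgam_seed (q : (V -> Prop) * R) : Prop :=
  (exists2 S, BV S & q = (S, lam S)) \/ (exists2 E, BX E & q = (fun v => E (pr v), mu E)).

Lemma amalgam_normal_form l : (forall e, List.In e l -> amalgam_seed e.2) ->
  exists ds ks, [/\ forall e, List.In e ds -> BV e.2, forall v, multiplicity ds v = 1,
    forall k, List.In k ks -> BX k.2,
    forall v, lcomb l (fun q => indic q.1 v) = step ds v + step ks (pr v) &
    lcomb l snd = \sum_(e <- ds) e.1 * lam e.2 + \sum_(k <- ks) k.1 * mu k.2].
Proof.
elim: l => [|[a q] l IH] lseed.
  exists [:: (0, fun _ => True)], [::]; split=> [e [<-|[]]|v|k []|v|].
  - exact: algebraT HBV.
  - by rewrite /multiplicity big_cons big_nil indic_in //; lra.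
  - by rewrite /lcomb /step !big_cons !big_nil /= Rmult_0_l; lra.
  - by rewrite /lcomb !big_cons !big_nil /= Rmult_0_l; lra.
have [ds [ks [Bds part Bks stepE valE]]] := IH (fun e el => lseed e (or_intror el)).
case: (lseed (a, q) (or_introl erefl)) => /= [[S BS ->]|[E BE ->]].
- exists (refine ds a S), ks; split=> [e /(refine_algebra HBV Bds BS)|v||v|] //.
  + exact: refine_partition.
  + by rewrite lcomb_cons stepE (refine_step _ _ part) /=; lra.
  + by rewrite lcomb_cons valE (refine_value HBV Hlam _ Bds BS part) /=; lra.
- exists ds, ((a, E) :: ks); split=> [||k [<-|/Bks]|v|] //.
  + by rewrite lcomb_cons stepE step_cons -[indic _ v]/(indic E (pr v)) /=; lra.
  + by rewrite lcomb_cons valE big_cons /=; lra.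
Qed.

Lemma amalgam_seed_consistent : consistent amalgam_seed.
Proof.
move=> l t lseed bound.
have [ds [ks [Bds part Bks stepE ->]]] := amalgam_normal_form lseed.
have disj v : multiplicity ds v <= 1 by rewrite part; lra.
have := amalgam_greedy (t := t) Bks (erefl (size ds)) Bds (algebraT HBX0) disj.
rewrite !step_intT (fa_prob1 Hmu) Rmult_1_r; apply=> [v _|e v eds ev _].
  by have [e [eds ev]] := multiplicity_cover (part v); exists e.
by have := bound v; rewrite stepE (step_disjoint eds ev).
Qed.

Theorem amalgamation : exists w, fa_prob (fun _ => True) w /\
  (forall S, BV S -> w S = lam S) /\ (forall E, BX E -> w (fun v => E (pr v)) = mu E).
Proof.
have [w [Hw wseed]] := consistent_fa_prob amalgam_seed_consistent.
exists w; split=> //; split=> [S BS|E BE]; apply: wseed.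
  by left; exists S.
by right; exists E.
Qed.

End Amalgamation.

Local Close Scope R_scope.

Lemma inj_comparable (X Y : Type) :
  (exists f : X -> Y, injective f) \/ (exists g : Y -> X, injective g).
Proof.
pose P (G : X * Y -> Prop) := forall a b, G a -> G b -> (a.1 = b.1 <-> a.2 = b.2).
have [G [PG Gmax]] : exists G, P G /\ forall G', classical_sets.proper G G' -> ~ P G'.
  apply: classical_sets.Zorn_bigcup => F FP chainF a b [A FA Aa] [B FB Bb].
  have [AB|BA] := chainF A B FA FB; first by apply: (FP B) => //; apply: AB.
  by apply: (FP A) => //; apply: BA.
have [totX|/existsNP [x0 /forallNP x0G]] := pselect (forall x, exists y, G (x, y)).
  left; exists (fun x => sval (cid (totX x))) => x x' eq.
  exact/(PG _ _ (svalP (cid (totX x))) (svalP (cid (totX x')))).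
have [totY|/existsNP [y0 /forallNP y0G]] := pselect (forall y, exists x, G (x, y)).
  right; exists (fun y => sval (cid (totY y))) => y y' eq.
  exact/(PG _ _ (svalP (cid (totY y))) (svalP (cid (totY y')))).
case: (Gmax (fun a => G a \/ a = (x0, y0))).
  by split=> [a Ga|sub]; [left | apply: (x0G y0); apply: sub; right].
move=> [a1 a2] [b1 b2] [Ga|[-> ->]] [Gb|[-> ->]] /=.
- exact: PG Ga Gb.
- by split=> eq; subst; [case: (x0G a2) | case: (y0G a1)].
- by split=> eq; subst; [case: (x0G b2) | case: (y0G b1)].
- by [].
Qed.

Lemma no_inj_nat_of_list_cover (T : Type) (l : seq T) (h : nat -> T) :
  injective h -> (forall x, List.In x l) -> False.
Proof.
move=> hinj lT.
have nd : List.NoDup (List.map h (List.seq 0 (length l).+1)).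
  exact: FinFun.Injective_map_NoDup hinj (List.seq_NoDup _ _).
have := List.NoDup_incl_length nd (fun x _ => lT x).
by rewrite List.length_map List.length_seq => /leP; rewrite ltnn.
Qed.

Lemma list_of_no_inj_seq (K : Type) (P : K -> Prop) :
  ~ (exists r : nat -> K, injective r /\ forall n, P (r n)) ->
  exists l, List.NoDup l /\ forall x, P x <-> List.In x l.
Proof.
move=> noseq.
have [l Pl] : exists l, forall x, P x -> List.In x l.
  apply: contrapT => /forallNP nocover.
  have fresh l : exists x, P x /\ ~ List.In x l.
    by have /existsNP [x /not_implyP] := nocover l; exists x.
  pose c l := sval (cid (fresh l)).
  pose L := fix L n := if n is n'.+1 then c (L n') :: L n' else [::].
  have in_L m n : m < n -> List.In (c (L m)) (L n).
    by elim: n => // n IH; rewrite ltnS leq_eqVlt => /orP [/eqP ->|/IH]; [left | right].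

  apply: noseq; exists (fun n => c (L n)); split=> [m n eq|n].
    have fresh_c k : ~ List.In (c (L k)) (L k) by exact: (svalP (cid (fresh (L k)))).2.
    have [mn|nm|//] := ltngtP m n.
      by case: (fresh_c n); rewrite -eq; apply: in_L.
    by case: (fresh_c m); rewrite eq; apply: in_L.
  exact: (svalP (cid (fresh (L n)))).1.
exists (List.filter (fun x => `[< P x >]) (List.nodup (fun x y => pselect (x = y)) l)).
split; first by apply: List.NoDup_filter; apply: List.NoDup_nodup.
move=> x; rewrite List.filter_In List.nodup_In; split=> [Px|[_ /asboolP //]].
by split; [exact: Pl | exact/asboolP].
Qed.

Lemma inj_nat_sum (X : Type) (h : nat -> X + X) :
  injective h -> exists g : nat -> X, injective g.
Proof.
move=> hinj; apply: contrapT => noX.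
have [|l [_ lX]] := @list_of_no_inj_seq X (fun _ => True).
  by move=> [r [rinj _]]; apply: noX; exists r.
apply: (@no_inj_nat_of_list_cover _ (List.map inl l ++ List.map inr l) h hinj).
by move=> [x|x]; apply: List.in_or_app; [left | right]; apply: List.in_map; apply/lX.
Qed.

Lemma maximal_seq_family (K : Type) : (exists f : nat -> K, injective f) ->
  exists (F : (nat -> K) -> Prop) (l : seq K),
  [/\ forall s, F s -> injective s,
      forall s s' m m', F s -> F s' -> s m = s' m' -> s = s',
      (exists s0, F s0), List.NoDup l &
      forall x, (~ exists s m, F s /\ s m = x) <-> List.In x l].
Proof.
move=> [fN fNinj].
pose Phi (F : (nat -> K) -> Prop) := (forall s, F s -> injective s) /\
  (forall s s' m m', F s -> F s' -> s m = s' m' -> s = s').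
have [F [[Finj Fdisj] Fmax]] : exists F, Phi F /\ forall F', classical_sets.proper F F' -> ~ Phi F'.
  apply: classical_sets.Zorn_bigcup => C CPhi chain.
  split=> [s [F CF Fs]|s s' m m' [F CF Fs] [F' CF' F's]]; first exact: (CPhi F CF).1.
  have [FF'|F'F] := chain F F' CF CF'.
    by apply: (CPhi F' CF').2 => //; apply: FF'.
  by apply: (CPhi F CF).2 => //; apply: F'F.
pose Rest x := ~ exists s m, F s /\ s m = x.
have noseq : ~ exists r : nat -> K, injective r /\ forall n, Rest (r n).
  move=> [r [rinj rRest]]; case: (Fmax (fun s => F s \/ s = r)).
    by split=> [s Fs|sub]; [left | apply: (rRest 0); exists r, 0; split=> //; apply: sub; right].
  split=> [s [/Finj|->]|s s' m m' [Fs|->] [Fs'|->] eq] //.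
  - exact: Fdisj eq.
  - by case: (rRest m'); exists s, m.
  - by case: (rRest m); exists s', m'.
have [l [lnodup lRest]] := list_of_no_inj_seq noseq.
exists F, l; split=> //.
apply: contrapT => /forallNP noF; apply: noseq; exists fN; split=> // n [s [m [Fs _]]].
exact: noF s Fs.
Qed.

Lemma seq_decomposition (K : Type) : (exists f : nat -> K, injective f) ->
  exists F : (nat -> K) -> Prop,
    (forall s s' m m', F s -> F s' -> s m = s' m' -> s = s' /\ m = m') /\
    (forall x, exists p : (nat -> K) * nat, F p.1 /\ p.1 p.2 = x).
Proof.
move=> Kinf; have [fN _] := Kinf.
have [F [l [Finj Fdisj [s0 Fs0] lnodup lRest]]] := maximal_seq_family Kinf.
pose nl := length l.
pose t0 j := if j < nl then List.nth j l (fN 0) else s0 (j - nl).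
have l_rest j : j < nl -> ~ exists s m, F s /\ s m = List.nth j l (fN 0).
  by move=> jl; apply/lRest; apply: List.nth_In; apply/ltP.
have t0_inj : injective t0.
  move=> j j'; rewrite /t0; case: ltnP => jl; case: ltnP => j'l eq.
  - exact: (proj1 (List.NoDup_nth l (fN 0)) lnodup j j' (ltP jl) (ltP j'l) eq).
  - by case: (l_rest j jl); exists s0, (j' - nl).
  - by case: (l_rest j' j'l); exists s0, (j - nl).
  - by rewrite -(subnK jl) -(subnK j'l) (Finj _ Fs0 _ _ eq).
have t0_F s m m' : F s -> s <> s0 -> t0 m <> s m'.
  rewrite /t0; case: ltnP => ml Fs ns0 eq; first by case: (l_rest m ml); exists s, m'.
  exact: ns0 (esym (Fdisj _ _ _ _ Fs0 Fs eq)).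
exists (fun t => t = t0 \/ F t /\ t <> s0); split.
  move=> s s' m m' [->|[Fs ns0]] [->|[Fs' ns0']] eq.
  - by split=> //; apply: t0_inj.
  - by case: (t0_F _ _ _ Fs' ns0' eq).
  - by case: (t0_F _ _ _ Fs ns0 (esym eq)).
  - by have ss' := Fdisj _ _ _ _ Fs Fs' eq; subst s'; split=> //; apply: (Finj _ Fs).
move=> x; have [[s [m [Fs <-]]]|xrest] := pselect (exists s m, F s /\ s m = x).
  have [->|ns0] := pselect (s = s0); last by exists (s, m); split=> //; right.
  exists (t0, nl + m); split; first by left.
  by rewrite /t0 /= ltnNge leq_addr /= addKn.
have [j [jl <-]] := List.In_nth _ _ (fN 0) (proj1 (lRest x) xrest).
by exists (t0, j); split; [left | rewrite /t0 /= ifT //; apply/ltP].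
Qed.

Lemma inj_sum_self (K : Type) :
  (exists f : nat -> K, injective f) -> exists h : K + K -> K, injective h.
Proof.
move=> /seq_decomposition [F [Funiq Fcover]].
pose pos x := sval (cid (Fcover x)).
have posP x : F (pos x).1 /\ (pos x).1 (pos x).2 = x := svalP (cid (Fcover x)).
have pos_inj x x' : (pos x).1 = (pos x').1 -> (pos x).2 = (pos x').2 -> x = x'.
  by move=> e1 e2; rewrite -(posP x).2 -(posP x').2 e1 e2.
exists (fun u => match u with
  | inl x => (pos x).1 (pos x).2.*2
  | inr x => (pos x).1 (pos x).2.*2.+1 end).
move=> [x|x] [x'|x'] /(Funiq _ _ _ _ (posP x).1 (posP x').1) [e1 e2].
- by rewrite (pos_inj x x' e1 (double_inj e2)).
- by move: (congr1 odd e2); rewrite /= !odd_double.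
- by move: (congr1 odd e2); rewrite /= !odd_double.
- by move: e2 => [/double_inj e2]; rewrite (pos_inj x x' e1 e2).
Qed.

Definition sum_map (X Y X' Y' : Type) (f : X -> X') (g : Y -> Y') (u : X + Y) : X' + Y' :=
  match u with inl x => inl (f x) | inr y => inr (g y) end.

Lemma sum_map_inj (X Y X' Y' : Type) (f : X -> X') (g : Y -> Y') :
  injective f -> injective g -> injective (sum_map f g).
Proof.
by move=> finj ginj [x|y] [x'|y'] //= [e]; [rewrite (finj _ _ e) | rewrite (ginj _ _ e)].
Qed.

Section CardUnion.
Variables (T kappa : Type) (A A' : T -> Prop).
Hypothesis kappa_inf : exists f : nat -> kappa, injective f.

Lemma not_inj_sum_small (B : Type) : card_lt B kappa -> ~ exists k : kappa -> B + B, injective k.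
Proof.
move=> [_ noK] [k kinj].
have [[r rinj]|noN] := pselect (exists r : nat -> B, injective r).
  have [d dinj] := inj_sum_self (ex_intro _ r rinj).
  by apply: noK; exists (d \o k); apply: inj_comp.
have [fN fNinj] := kappa_inf.
by apply: noN; apply: (@inj_nat_sum _ (k \o fN)); apply: inj_comp.
Qed.

Definition union_split (x : {x | A x \/ A' x}) : {x | A x} + {x | A' x} :=
  match pselect (A (sval x)) with
  | left H => inl (exist _ _ H)
  | right H => inr (exist _ _ (or_ind (fun a => False_ind _ (H a)) id (svalP x)))
  end.

Lemma union_split_inj : injective union_split.
Proof.
move=> [x Hx] [y Hy]; rewrite /union_split /=.
by case: pselect => Ax; case: pselect => Ay // [exy]; apply: eq_exist.
Qed.

Lemma card_lt_union :
  card_lt {x | A x} kappa -> card_lt {x | A' x} kappa -> card_lt {x | A x \/ A' x} kappa.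
Proof.
move=> [[f finj] noA] [[f' f'inj] noA']; split.
  have [h hinj] := inj_sum_self kappa_inf.
  exists (h \o sum_map f f' \o union_split).
  apply: inj_comp; last exact: union_split_inj.
  by apply: inj_comp => //; apply: sum_map_inj.
move=> [g ginj]; have [[j jinj]|[j jinj]] := inj_comparable {x | A x} {x | A' x}.
  apply: (@not_inj_sum_small {x | A' x}); first by split=> //; exists f'.
  exists (sum_map j id \o union_split \o g).
  by apply: inj_comp => //; apply: inj_comp; [apply: sum_map_inj | apply: union_split_inj].
apply: (@not_inj_sum_small {x | A x}); first by split=> //; exists f.
exists (sum_map id j \o union_split \o g).
by apply: inj_comp => //; apply: inj_comp; [apply: sum_map_inj | apply: union_split_inj].
Qed.
End CardUnion.

Lemma card_lt_finite_range (T kappa : Type) k (b : 'I_k -> T) :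
  (exists f : nat -> kappa, injective f) -> card_lt {x | exists i, x = b i} kappa.
Proof.
move=> [fN fNinj]; pose ix (x : {x | exists i, x = b i}) := sval (cid (svalP x)).
have ixP x : sval x = b (ix x) := svalP (cid (svalP x)).
have ix_inj : injective ix.
  move=> [x xb] [y yb] e; apply: eq_exist.
  by have /= -> := ixP (exist _ x xb); have /= -> := ixP (exist _ y yb); rewrite e.
split; first by exists (fun x => fN (ix x)) => x y /fNinj /val_inj /ix_inj.
move=> [g ginj].
have h_inj : injective (fun m : 'I_k.+1 => ix (g (fN m))).
  by move=> m m' /ix_inj /ginj /fNinj /val_inj.
by have := leq_card _ h_inj; rewrite !card_ord ltnn.
Qed.

Section Renaming.
Variable L : language.

Fixpoint rename_term m m' (r : 'I_m -> 'I_m') (t : term L m) : term L m' :=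
  match t with
  | tvar i => tvar L (r i)
  | tfun f ts => tfun (fun i => rename_term r (ts i))
  end.

Definition lift_ren m m' (r : 'I_m -> 'I_m') (i : 'I_m.+1) : 'I_m'.+1 :=
  if unlift ord_max i is Some j then lift ord_max (r j) else ord_max.

Fixpoint rename m (phi : form L m) : forall m', ('I_m -> 'I_m') -> form L m' :=
  match phi in form _ k return forall m', ('I_k -> 'I_m') -> form L m' with
  | feq _ t1 t2 => fun m' r => feq (rename_term r t1) (rename_term r t2)
  | Defs.frel _ rr ts => fun m' r => Defs.frel (fun i => rename_term r (ts i))
  | ffalse _ => fun m' r => ffalse L m'
  | fneg _ q => fun m' r => fneg (rename q r)
  | fand _ q1 q2 => fun m' r => fand (rename q1 r) (rename q2 r)
  | fex _ q => fun m' r => fex (rename q (lift_ren r))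
  end.

Lemma eval_rename (M : structure L) m m' (r : 'I_m -> 'I_m') (e : 'I_m' -> M) t :
  eval e (rename_term r t) = eval (e \o r) t.
Proof.
elim: t => [i|f ts IH] //=; congr (finterp _); apply: funext => i; exact: IH.
Qed.

Lemma ext_lift_ren (M : Type) m m' (r : 'I_m -> 'I_m') (e : 'I_m' -> M) u :
  ext e u \o lift_ren r = ext (e \o r) u.
Proof.
apply: funext => i; rewrite /lift_ren /ext /=.
by case: (unlift ord_max i) => [j|] /=; rewrite ?liftK ?unlift_none.
Qed.

Lemma sat_rename (M : structure L) m (phi : form L m) m' (r : 'I_m -> 'I_m')
    (e : 'I_m' -> M) :
  sat (rename phi r) e <-> sat phi (e \o r).
Proof.
elim: phi m' r e => {m} [m t1 t2|m rr ts|m|m q IH|m q1 IH1 q2 IH2|m q IH] m' r e /=.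
- by rewrite !eval_rename.
- by under eq_fun do rewrite eval_rename.
- by [].
- by rewrite IH.
- by rewrite IH1 IH2.
- by split=> -[u Hu]; exists u; move: Hu; rewrite IH ext_lift_ren.
Qed.

End Renaming.

Section Tuples.
Variable T : Type.

Lemma tcat_lshift m k (a : 'I_m -> T) (c : 'I_k -> T) i : tcat a c (lshift k i) = a i.
Proof. by rewrite /tcat (unsplitK (inl _ i)). Qed.

Lemma tcat_rshift m k (a : 'I_m -> T) (c : 'I_k -> T) i : tcat a c (rshift m i) = c i.
Proof. by rewrite /tcat (unsplitK (inr _ i)). Qed.

Lemma tcat_lshiftK m k (a : 'I_m -> T) (c : 'I_k -> T) : tcat a c \o lshift k = a.
Proof. by apply: funext => i; rewrite /= tcat_lshift. Qed.

Lemma tcat_rshiftK m k (a : 'I_m -> T) (c : 'I_k -> T) : tcat a c \o @rshift m k = c.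
Proof. by apply: funext => i; rewrite /= tcat_rshift. Qed.

Lemma tcat_comp (T' : Type) (f : T -> T') m k (a : 'I_m -> T) (c : 'I_k -> T) :
  f \o tcat a c = tcat (f \o a) (f \o c).
Proof. by apply: funext => i; rewrite /tcat /=; case: (split i). Qed.

Lemma tcat_eta m k (v : 'I_(m + k) -> T) :
  tcat (fun i => v (lshift k i)) (fun j => v (rshift m j)) = v.
Proof. by apply: funext => i; rewrite /tcat; case: split_ordP => j ->. Qed.

Lemma ext_lift n (e : 'I_n -> T) u j : ext e u (lift ord_max j) = e j.
Proof. by rewrite /ext liftK. Qed.

Lemma ext_max n (e : 'I_n -> T) u : ext e u ord_max = u.
Proof. by rewrite /ext unlift_none. Qed.

Lemma ext_comp (T' : Type) (f : T -> T') n (e : 'I_n -> T) u :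
  f \o ext e u = ext (f \o e) (f u).
Proof. by apply: funext => i; rewrite /ext /=; case: (unlift ord_max i). Qed.

Lemma ext_eta n (w : 'I_n.+1 -> T) : ext (fun j => w (lift ord_max j)) (w ord_max) = w.
Proof. by apply: funext => i; rewrite /ext; case: unliftP => [j|] ->. Qed.

Lemma tcat0 m (e : 'I_m -> T) (w : 'I_0 -> T) : tcat e w = e \o cast_ord (addn0 m).
Proof.
apply: funext => i; case: (split_ordP i) => j ->.
  by rewrite tcat_lshift /=; congr e; apply: val_inj.
by case: j.
Qed.
Lemma tcat_ext m p (e : 'I_m -> T) (w : 'I_p -> T) u :
  tcat e (ext w u) = ext (tcat e w) u \o cast_ord (addnS m p).
Proof.
apply: funext => i; case: (split_ordP i) => j -> /=.
  have -> : cast_ord (addnS m p) (lshift p.+1 j) = lift ord_max (lshift p j).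
    by apply: val_inj; rewrite /= /bump leqNgt ltn_addr.
  by rewrite tcat_lshift ext_lift tcat_lshift.
case: (unliftP ord_max j) => [j'|] ->.
  have -> : cast_ord (addnS m p) (rshift m (lift ord_max j')) = lift ord_max (rshift m j').
    by apply: val_inj; rewrite /= bumpDl.
  by rewrite tcat_rshift !ext_lift tcat_rshift.
have -> : cast_ord (addnS m p) (rshift m ord_max) = ord_max.
  by apply: val_inj.
by rewrite tcat_rshift !ext_max.
Qed.
End Tuples.

Section BlockQuantifier.
Variable L : language.

Lemma sat_fex (M : structure L) m (q : form L m.+1) (e : 'I_m -> M) :
  sat (fex q) e <-> exists u, sat q (ext e u).
Proof. by []. Qed.

Fixpoint fexs m p : form L (m + p) -> form L m :=
  match p return form L (m + p) -> form L m with
  | 0 => fun phi => rename phi (cast_ord (addn0 m))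
  | p'.+1 => fun phi => fexs (fex (rename phi (cast_ord (addnS m p'))))
  end.

Lemma fexs0 m (phi : form L (m + 0)) : fexs phi = rename phi (cast_ord (addn0 m)).
Proof. by []. Qed.

Lemma fexsS m p (phi : form L (m + p.+1)) :
  fexs phi = fexs (fex (rename phi (cast_ord (addnS m p)))).
Proof. by []. Qed.

Lemma sat_fexs (M : structure L) m p (phi : form L (m + p)) (e : 'I_m -> M) :
  sat (fexs phi) e <-> exists w : 'I_p -> M, sat phi (tcat e w).
Proof.
elim: p phi e => [|p IH] phi e.
  have w0 : 'I_0 -> M by case.
  by rewrite fexs0 sat_rename; split=> [?|[w]]; [exists w0|]; rewrite tcat0.
rewrite fexsS IH; split=> [[w /sat_fex [u]]|[w]].
  by rewrite sat_rename -tcat_ext => ?; exists (ext w u).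
rewrite -[w]ext_eta tcat_ext => ?; exists (fun j => w (lift ord_max j)).
by apply/sat_fex; exists (w ord_max); apply/sat_rename.
Qed.

End BlockQuantifier.

Section Definable.
Variables (L : language) (M : structure L).
Implicit Types (C : M -> Prop).

Definition ren_params n k k' (f : 'I_k -> 'I_k') (i : 'I_(n + k)) : 'I_(n + k') :=
  match split i with inl j => lshift k' j | inr j => rshift n (f j) end.

Lemma tcat_ren_params (T : Type) n k k' (f : 'I_k -> 'I_k') (a : 'I_n -> T) (c : 'I_k' -> T) :
  tcat a c \o ren_params f = tcat a (c \o f).
Proof.
apply: funext => i; rewrite /ren_params /=.
by case: (split_ordP i) => j ->; rewrite ?(unsplitK (inl _ j)) ?(unsplitK (inr _ j)) ?tcat_lshift ?tcat_rshift.
Qed.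

Lemma definable_sub C C' n (S : ('I_n -> M) -> Prop) :
  (forall x, C x -> C' x) -> definable C S -> definable C' S.
Proof. by move=> CC' [k [phi [c [Cc ->]]]]; exists k, phi, c; split=> // i; apply: CC'. Qed.

Lemma definable_algebra C n : set_algebra (@definable L M n C).
Proof.
split.
- have c0 : 'I_0 -> M by case.
  exists 0, (fneg (ffalse L (n + 0))), c0; split; first by case.
  by apply: set_ext => a; rewrite /defset /=; tauto.
- by move=> S [k [phi [c [Cc ->]]]]; exists k, (fneg phi), c.
move=> S T [k1 [phi [c [Cc ->]]]] [k2 [psi [d [Cd ->]]]].
exists (k1 + k2), (fand (rename phi (ren_params (lshift k2)))
                        (rename psi (ren_params (@rshift k1 k2)))), (tcat c d); split.
  by move=> i; rewrite /tcat; case: split => j; [apply: Cc | apply: Cd].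
apply: set_ext => a; rewrite /defset /= !sat_rename !tcat_ren_params.
by rewrite tcat_lshiftK tcat_rshiftK.
Qed.
Lemma definable_cyl C n p (S : ('I_n -> M) -> Prop) : definable C S ->
  definable C (fun v : 'I_(n + p) -> M => S (fun i => v (lshift p i))).
Proof.
move=> [k [phi [c [Cc ->]]]].
pose r (i : 'I_(n + k)) : 'I_(n + p + k) :=
  match split i with inl j => lshift k (lshift p j) | inr j => rshift (n + p) j end.
exists k, (rename phi r), c; split=> //.
apply: set_ext => v; rewrite /defset sat_rename.
suff -> : tcat v c \o r = tcat (fun i => v (lshift p i)) c by [].
apply: funext => i; rewrite /r /=.
by case: (split_ordP i) => j ->; rewrite ?(unsplitK (inl _ j)) ?(unsplitK (inr _ j)) ?tcat_lshift ?tcat_rshift.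
Qed.

Lemma definable_proj C n p (S : ('I_(n + p) -> M) -> Prop) : definable C S ->
  definable C (fun x : 'I_n -> M => exists y : 'I_p -> M, S (tcat x y)).
Proof.
move=> [k [phi [c [Cc ->]]]].
pose r (i : 'I_(n + p + k)) : 'I_(n + k + p) :=
  match split i with
  | inl j => match split j with
             | inl j1 => lshift p (lshift k j1)
             | inr j2 => rshift (n + k) j2 end
  | inr j => lshift p (rshift n j) end.
exists k, (fexs (rename phi r)), c; split=> //.
apply: set_ext => x; rewrite /defset sat_fexs.
suff E y : tcat (tcat x c) y \o r = tcat (tcat x y) c.
  by split=> -[y Sy]; exists y; move: Sy; rewrite sat_rename E.
apply: funext => i; rewrite /r /=.
case: (split_ordP i) => j ->; rewrite ?(unsplitK (inl _ j)) ?(unsplitK (inr _ j)).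
  by case: (split_ordP j) => j' ->; rewrite ?(unsplitK (inl _ j')) ?(unsplitK (inr _ j')) ?tcat_lshift ?tcat_rshift.
by rewrite tcat_lshift !tcat_rshift.
Qed.

End Definable.

Section Automorphisms.
Variables (L : language) (U : structure L) (s : U -> U).
Variable g : U -> U.
Hypotheses (s_aut : automorphism s) (sg : cancel s g) (gs : cancel g s).

Lemma eval_aut n (e : 'I_n -> U) t : eval (s \o e) t = s (eval e t).
Proof.
have [_ [sf _]] := s_aut.
elim: t => [i|f ts IH] //=; rewrite sf; congr (finterp _); apply: funext => i; exact: IH.
Qed.

Lemma sat_aut n (phi : form L n) (e : 'I_n -> U) : sat phi (s \o e) <-> sat phi e.
Proof.
have [_ [_ sr]] := s_aut.
elim: phi e => {n} [n t1 t2|n r ts|n|n q IH|n q1 IH1 q2 IH2|n q IH] e /=.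
- by rewrite !eval_aut; split=> [/(can_inj sg)|->].
- under eq_fun do rewrite eval_aut.
  exact: iff_sym (sr r (fun i => eval e (ts i))).
- by [].
- by rewrite IH.
- by rewrite IH1 IH2.
- split=> -[u]; [rewrite -(gs u) -ext_comp IH | rewrite -IH ext_comp] => ?.
  + by exists (g u).
  + by exists (s u).
Qed.

Lemma defset_aut n k (phi : form L (n + k)) (c : 'I_k -> U) (v : 'I_n -> U) :
  defset phi c (s \o v) <-> defset phi (g \o c) v.
Proof.
rewrite /defset -(sat_aut _ (tcat v _)) tcat_comp.
suff -> : s \o (g \o c) = c by [].
by apply: funext => j /=; rewrite gs.
Qed.

Lemma same_type_aut (A : U -> Prop) : (forall x, A x -> s x = x) ->
  forall k (d : 'I_k -> U), same_type A (g \o d) d.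
Proof.
move=> sA k d l psi a Aa; rewrite -(sat_aut _ (tcat (g \o d) a)) tcat_comp.
have -> : s \o (g \o d) = d by apply: funext => j /=; rewrite gs.
by have -> : s \o a = a by apply: funext => j /=; rewrite sA.
Qed.

End Automorphisms.

Section Homogeneity.
Variables (L : language) (U : structure L) (A : U -> Prop) (k : nat) (b c : 'I_k -> U).
Hypothesis bc : same_type A b c.

Definition swap (x : U) : U :=
  if pselect (exists i, x = b i /\ ~ A x) is left H then c (sval (cid H)) else x.

Lemma swap_fix x : A x -> swap x = x.
Proof. by rewrite /swap => Ax; case: pselect => // H; case: (H) => i [_ []]. Qed.

Lemma same_type_eq i i' : b i = b i' -> c i = c i'.
Proof.
have a0 : 'I_0 -> U by case.
have := bc (feq (tvar L (lshift 0 i)) (tvar L (lshift 0 i'))) (a := a0).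
by rewrite /= !tcat_lshift => /(_ ltac:(by case)) [].
Qed.

Lemma same_type_fix i : A (b i) -> c i = b i.
Proof.
move=> Abi; have := bc (feq (tvar L (lshift 1 i)) (tvar L (rshift k ord0))) (a := fun=> b i).
by rewrite /= !tcat_lshift !tcat_rshift => /(_ (fun=> Abi)) [/(_ erefl)].
Qed.

Lemma swap_b i : swap (b i) = c i.
Proof.
have [Abi|nAbi] := pselect (A (b i)); first by rewrite swap_fix // same_type_fix.
rewrite /swap; case: pselect => [H|[]]; last by exists i.
by case: (svalP (cid H)) => /esym /same_type_eq.
Qed.

Lemma swap_factor n (a : 'I_n -> U) : (forall j, A (a j) \/ exists i, a j = b i) ->
  exists l (a' : 'I_l -> U) (r : 'I_n -> 'I_(k + l)),
    [/\ forall i, A (a' i), a = tcat b a' \o r & (fun j => swap (a j)) = tcat c a' \o r].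
Proof.
move=> ab.
suff [l [a' [Aa' pick]]] : exists l (a' : 'I_l -> U), (forall i, A (a' i)) /\
    forall j, exists t, a j = tcat b a' t /\ swap (a j) = tcat c a' t.
  exists l, a', (fun j => sval (cid (pick j))); split=> //; apply: funext => j.
    exact: (svalP (cid (pick j))).1.
  exact: (svalP (cid (pick j))).2.
have [[a0 Aa0]|noA] := pselect (exists a0, A a0).
  exists n, (fun j => if pselect (A (a j)) then a j else a0); split.
    by move=> j; case: pselect.
  move=> j; have [Aj|nAj] := pselect (A (a j)).
    by exists (rshift k j); rewrite !tcat_rshift swap_fix //; case: pselect.
  have [//|[i ->]] := ab j.
  by exists (lshift n i); rewrite !tcat_lshift swap_b.
have a0 : 'I_0 -> U by case.
exists 0, a0; split=> [[]//|j]; have [Aj|[i ->]] := ab j; first by case: noA; exists (a j).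
by exists (lshift 0 i); rewrite !tcat_lshift swap_b.
Qed.

Lemma swap_elementary : elementary_on (fun x => A x \/ exists i, x = b i) swap.
Proof.
move=> n phi a ab; have [l [a' [r [Aa' -> ->]]]] := swap_factor ab.
by rewrite -!sat_rename; apply: bc.
Qed.

Theorem homogeneous_extension kappa : monster U kappa -> small kappa A ->
  exists s, [/\ automorphism s, forall x, A x -> s x = x & forall i, s (b i) = c i].
Proof.
move=> [kappa_inf [_ [_ hom]]] smallA.
have smallAb : small kappa (fun x => A x \/ exists i, x = b i).
  exact: card_lt_union kappa_inf smallA (card_lt_finite_range b kappa_inf).
have [s [s_aut s_ext]] := hom _ _ smallAb swap_elementary.
exists s; split=> // [x Ax|i]; rewrite s_ext.
- exact: swap_fix.
- by left.
- exact: swap_b.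
- by right; exists i.
Qed.

End Homogeneity.

Lemma agree_sub (L : language) (M : structure L) n (C C' : M -> Prop)
    (m1 m2 : (('I_n -> M) -> Prop) -> R) :
  (forall x, C x -> C' x) -> agree C' m1 m2 -> agree C m1 m2.
Proof. by move=> CC' m12 S /(definable_sub CC'); apply: m12. Qed.

Lemma same_type_sub (L : language) (M : structure L) (A A' : M -> Prop) k (b c : 'I_k -> M) :
  (forall x, A x -> A' x) -> same_type A' b c -> same_type A b c.
Proof. by move=> AA' bc l psi a Aa; apply: bc => i; apply: AA'. Qed.

Section Invariance.
Variables (L : language) (U : structure L) (n p : nat).
Variable mu : (('I_n -> U) -> Prop) -> R.
Hypothesis Hmu : keisler (@allM L U) mu.

Lemma invariant_over_sub (A A' : U -> Prop) :
  (forall x, A x -> A' x) -> invariant_over A mu -> invariant_over A' mu.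
Proof. by move=> AA' muA k phi b c /(same_type_sub AA'); apply: muA. Qed.

Lemma global_extension (C : U -> Prop) (lam : (('I_(n + p) -> U) -> Prop) -> R) :
  keisler C lam -> agree C (proj_x lam) mu ->
  exists w, [/\ fa_prob (fun _ => True) w, agree C w lam & agree (@allM L U) (proj_x w) mu].
Proof.
move=> Hlam lam_mu.
pose pr (v : 'I_(n + p) -> U) : 'I_n -> U := fun i => v (lshift p i).
have [v0] := fa_prob_inhabited (definable_algebra C (n + p)) Hlam.
have [|||||w [Hw [w_lam w_mu]]] := @amalgamation _ _ pr (definable C) (definable (@allM L U))
    (definable C) lam mu (definable_algebra _ _) (definable_algebra _ _) (definable_algebra _ _) Hlam Hmu.
- by move=> E; apply: definable_sub.
- by move=> E; apply: definable_cyl.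
- move=> D /(definable_proj (p := p)); congr definable; apply: set_ext => x.
  split=> [[y Dxy]|[v Dv <-]]; first by exists (tcat x y) => //; exact: tcat_lshiftK.
  by exists (fun j => v (rshift n j)); rewrite tcat_eta.
- by move=> x; exists (tcat x (fun j => v0 (rshift n j))); exact: tcat_lshiftK.
- exact: lam_mu.
by exists w; split=> // [S /w_lam | S /w_mu].
Qed.
Lemma geE_sub (A A' : U -> Prop) (nu : (('I_p -> U) -> Prop) -> R) :
  (forall x, A x -> A' x) -> geE A mu nu -> geE A' mu nu.
Proof.
move=> AA' [lam [Hlam [lam_mu Hnu]]].
have [w [Hw w_lam w_mu]] := global_extension Hlam lam_mu.
exists w; split; first exact: fa_prob_sub Hw.
split; first by apply: agree_sub w_mu.
move=> w' Hw' w'_w w'_mu; apply: Hnu => // S AS.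
by rewrite w'_w -?w_lam //; apply: definable_sub AS.
Qed.

Lemma invariant_over_geE kappa (A : U -> Prop) (nu : (('I_p -> U) -> Prop) -> R) :
  monster U kappa -> small kappa A -> invariant_over A mu -> geE A mu nu ->
  invariant_over A nu.
Proof.
move=> HU smallA mu_inv [lam [Hlam [lam_mu Hnu]]] k phi b c bc.
have [w [Hw w_lam w_mu]] := global_extension Hlam lam_mu.
have [s [s_aut s_fix s_bc]] := homogeneous_extension bc HU smallA.
have [g sg gs] := s_aut.1.
have g_fix x : A x -> g x = x by move=> Ax; rewrite -{1}(s_fix x Ax) sg.
pose w' S := w (fun v : 'I_(n + p) -> U => S (s \o v)).
have w'_pull m (h : ('I_(n + p) -> U) -> 'I_m -> U) k' (psi : form L (m + k')) d :
    (forall v, h (s \o v) = s \o h v) ->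
    w' (fun v => defset psi d (h v)) = w (fun v => defset psi (g \o d) (h v)).
  by move=> hs; congr w; apply: set_ext => v; rewrite /= hs; apply: defset_aut.
have nu_w : agree (@allM L U) (proj_y w) nu by apply: Hnu => //; exact: fa_prob_sub Hw.
have nu_w' : agree (@allM L U) (proj_y w') nu.
  apply: Hnu.
  - by apply: fa_prob_sub (fa_prob_comap _ Hw).
  - move=> _ [k' [psi [d [Ad ->]]]].
    rewrite -w_lam; last by exists k', psi, d.
    rewrite (w'_pull _ id) //; congr (w (defset psi _)).
    by apply: funext => i /=; apply: g_fix; apply: Ad.
  - move=> _ [k' [psi [d [_ ->]]]].
    rewrite /proj_x (w'_pull n (fun v i => v (lshift p i))) //.
    rewrite -[w _]/(proj_x w (defset psi (g \o d))) w_mu; last by exists k', psi, (g \o d).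
    by apply: mu_inv; apply: (same_type_aut s_aut sg gs s_fix).
have -> : b = g \o c by apply: funext => i /=; rewrite -s_bc sg.
rewrite -nu_w ?{1}/proj_y; last by exists k, phi, (g \o c).
rewrite -(w'_pull p (fun v j => v (rshift n j))) // -[w' _]/(proj_y w' (defset phi c)).
by rewrite nu_w' //; exists k, phi, c.
Qed.

End Invariance.

Theorem proposition4p4 (L : language) (kappa : Type) (U : structure L)
  (HU : monster U kappa) (n p : nat)
  (mu : (('I_n -> U) -> Prop) -> R) (nu : (('I_p -> U) -> Prop) -> R)
  (Hmu : keisler (@allM L U) mu) (Hnu : keisler (@allM L U) nu) :
  (forall A : U -> Prop, small kappa A ->
     invariant_over A mu -> geE A mu nu -> invariant_over A nu) /\
  (measure_invariant kappa mu -> geE_some kappa mu nu -> measure_invariant kappa nu).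
Proof.
split=> [A|[A [smallA muA]] [A' [smallA' geA']]]; first by move=> smallA; apply: (invariant_over_geE Hmu HU smallA).
have smallAA' : small kappa (fun x => A x \/ A' x) by exact: card_lt_union HU.1 smallA smallA'.
exists (fun x => A x \/ A' x); split=> //.
apply: (invariant_over_geE Hmu HU smallAA').
  by apply: invariant_over_sub muA => x; left.
by apply: (geE_sub Hmu) geA' => x; right.
Qed.
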